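(* Let $E,E_0$ be real Banach spaces and $F,G:[a,b]\to E$ maps with $G$ continuous. Let $\Phi\subset\mathcal L(E,E_0)$ be a separating set for $E$, and assume that for each $\phi\in\Phi$ the composition $\phi\circ F:[a,b]\to E_0$ is of class $C^1$ with $(\phi\circ F)'(t)=\phi(G(t))$ for all $t\in[a,b]$. Then $F$ is of class $C^1$ and $F'(t)=G(t)$ for all $t\in[a,b]$.
   Context: $\mathcal L(E,E_0)$ denotes the bounded linear operators $E\to E_0$. A subset $\Phi\subset\mathcal L(E,E_0)$ is separating for $E$ if for every $x\in E\setminus\{0\}$ there is $\phi\in\Phi$ with $\phi(x)\neq0$. *)

From HB Require Import structures.
From mathcomp Require Import all_boot all_order all_algebra.
From mathcomp Require Import all_classical all_reals all_analysis.
Set Implicit Arguments. Unset Strict Implicit. Unset Printing Implicit Defensive.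
Import Order.TTheory GRing.Theory Num.Theory.
Import numFieldNormedType.Exports.
Local Open Scope classical_set_scope.
Local Open Scope ring_scope.

(* For A = [a,b] this is the usual (one-sided at the
   endpoints) derivative on a closed interval. *)
Definition deriv_within {R : realType} {V : normedModType R}
  (A : set R) (f : R -> V) (t : R) (l : V) : Prop :=
  (fun h : R => h^-1 *: (f (t + h) - f t)) @ within (fun h => A (t + h)) 0^' --> l.

Definition C1_on {R : realType} {V : normedModType R}
  (a b : R) (f f' : R -> V) : Prop :=
  (forall t, `[a, b]%classic t -> deriv_within `[a, b]%classic f t (f' t)) /\
  {within `[a, b]%classic, continuous f'}.

Definition separating {R : realType} {E E0 : normedModType R}
  (Phi : set {linear E -> E0}) : Prop :=
  forall x : E, x != 0 -> exists2 phi, Phi phi & phi x != 0.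

(* Since G is continuous on the compact segment [a, b], it is uniformly
   continuous there, so the integrals of the step functions sampling G on finer
   and finer uniform partitions of [a, b] form a Cauchy sequence; E being
   complete, they converge to a primitive I of G.  For every phi in Phi,
   phi \o (F - I) then has zero derivative on [a, b], hence is constant, and
   since Phi separates points, F - I itself is constant: F has derivative G.
   The three local-to-global steps (uniform continuity, constancy, and the
   Cauchy estimate) all go through real induction. *)

From HB Require Import structures.
From mathcomp Require Import all_boot all_order all_algebra.
From mathcomp Require Import all_classical all_reals all_analysis.
From mathcomp Require Import ring lra.
Set Implicit Arguments. Unset Strict Implicit. Unset Printing Implicit Defensive.
Import Order.TTheory GRing.Theory Num.Theory.
Import numFieldNormedType.Exports.
Local Open Scope classical_set_scope.
Local Open Scope ring_scope.

Lemma subrACA (V : zmodType) (x y z w : V) : x - y - (z - w) = x - z - (y - w).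
Proof. by rewrite !opprB !addrA [x - y + w]addrAC [x - z + w]addrAC addrAC. Qed.

Section DerivWithin.
Variables (R : realType) (V : normedModType R).

Lemma deriv_withinP (A : set R) (f : R -> V) t l :
  deriv_within A f t l <-> forall e, 0 < e -> exists2 d, 0 < d &
    forall h, h != 0 -> `|h| < d -> A (t + h) ->
      `|f (t + h) - f t - h *: l| <= e * `|h|.
Proof.
have quot h : h != 0 -> `|f (t + h) - f t - h *: l| = `|h| * `|l - h^-1 *: (f (t + h) - f t)|.
  move=> h0; rewrite -normrZ distrC scalerBr scalerA mulfV // scale1r.
  by rewrite distrC.
rewrite /deriv_within; split.
- move=> /cvgrPdist_le cvgl e e0; have := cvgl e e0.
  rewrite near_withinE /dnbhs near_withinE => /nbhs_ballP [d d0 Hd].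
  exists d => // h h0 hd Ah.
  have : ball 0 d h by rewrite -ball_normE /= sub0r normrN.
  move=> /Hd /(_ h0) /(_ Ah) /= He.
  by rewrite quot // mulrC ler_wpM2r.
- move=> Hd; apply/cvgrPdist_le => e e0.
  have [d d0 {}Hd] := Hd e e0.
  rewrite near_withinE /dnbhs near_withinE; apply/nbhs_ballP; exists d => // h.
  rewrite -ball_normE /= sub0r normrN => hd h0 Ah /=.
  by have := Hd h h0 hd Ah; rewrite quot // mulrC ler_pM2r // normr_gt0.
Qed.

Lemma deriv_withinB (A : set R) (f g : R -> V) t l1 l2 :
  deriv_within A f t l1 -> deriv_within A g t l2 ->
  deriv_within A (fun x => f x - g x) t (l1 - l2).
Proof.
move=> f' g'; rewrite /deriv_within.
under eq_fun do rewrite subrACA scalerBr.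
exact: cvgB.
Qed.

Lemma deriv_within_linear (W : normedModType R) (phi : {linear V -> W})
    (A : set R) (f : R -> V) t l :
  continuous phi -> deriv_within A f t l -> deriv_within A (phi \o f) t (phi l).
Proof.
move=> phi_cont f'; rewrite /deriv_within.
suff -> : (fun h => h^-1 *: ((phi \o f) (t + h) - (phi \o f) t)) =
    phi \o (fun h => h^-1 *: (f (t + h) - f t)).
  by apply: continuous_cvg => //; exact: phi_cont.
by apply/funext => h /=; rewrite -linearB -linearZ.
Qed.

End DerivWithin.

Section RealInduction.
Variable R : realType.

Lemma real_induction (P : R -> Prop) (a b : R) :
  (forall x, a <= x <= b -> (forall u, a <= u < x -> P u) ->
    exists2 d, 0 < d & forall u, x <= u <= b -> u < x + d -> P u) ->
  forall x, a <= x <= b -> P x.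
Proof.
move=> step x0 x0ab; apply: contrapT => nPx0.
pose S := [set u | a <= u <= b /\ ~ P u].
have Sx0 : S x0 by [].
have lbS : lbound S a by move=> u [/andP[]].
have infS u : S u -> inf S <= u by apply: ge_inf; exists a.
have a_inf : a <= inf S := lb_le_inf (ex_intro _ x0 Sx0) lbS.
have inf_b : inf S <= b by case/andP: x0ab => _; apply: le_trans (infS _ Sx0).
have below u : a <= u < inf S -> P u.
  move=> /andP[au uinf]; apply: contrapT => nPu.
  have : S u by split=> //; rewrite au (le_trans (ltW uinf)).
  by move=> /infS; rewrite leNgt uinf.
have [d d0 Pd] : exists2 d, 0 < d & forall u, inf S <= u <= b -> u < inf S + d -> P u.
  by apply: step below; apply/andP.
have : inf S + d <= inf S.
  apply: lb_le_inf; first by exists x0.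
  move=> u Su; have [/andP[_ ub] nPu] := Su.
  by rewrite leNgt; apply/negP => ud; apply/nPu/Pd; rewrite ?infS.
by rewrite gerDl leNgt d0.
Qed.

End RealInduction.

Section Segment.
Variables (R : realType) (V : normedModType R).
Implicit Types (a b e : R) (f G : R -> V).

Lemma local_mean_value_ineq f a b e :
  (forall x, a <= x <= b -> exists2 d, 0 < d & forall y, a <= y <= b ->
     `|y - x| < d -> `|f y - f x| <= e * `|y - x|) ->
  forall t, a <= t <= b -> `|f t - f a| <= e * (t - a).
Proof.
move=> f_loc; apply: real_induction => x xab IH.
have extend u v : v <= u -> `|f v - f a| <= e * (v - a) ->
    `|f u - f v| <= e * `|u - v| -> `|f u - f a| <= e * (u - a).
  move=> vu fv fuv; rewrite ger0_norm ?subr_ge0 // in fuv.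
  by apply: le_trans (ler_distD (f v) _ _) _; lra.
have [d d0 Hd] := f_loc x xab.
have Px : `|f x - f a| <= e * (x - a).
  case/andP: xab => ax xb; have [->|xa] := eqVneq x a.
    by rewrite !subrr !normr0 mulr0.
  have {}ax : a < x by rewrite lt_def xa.
  pose u := Num.max a (x - d / 2).
  have au : a <= u by rewrite le_max lexx.
  have ux : u < x by rewrite gt_max ax /=; lra.
  apply: (extend x u (ltW ux)); first by apply: IH; rewrite au.
  rewrite distrC (distrC x); apply: Hd; first by rewrite au (le_trans (ltW ux)).
  rewrite ltr0_norm ?subr_lt0 //.
  have : x - d / 2 <= u by rewrite le_max lexx orbT.
  lra.
exists d => // u /andP[xu ub] uxd; apply: (extend u x xu Px).
apply: Hd; first by rewrite ub (le_trans _ xu) //; case/andP: xab.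
by rewrite ger0_norm ?subr_ge0 //; lra.
Qed.

Lemma deriv_within0_const f a b :
  (forall t, a <= t <= b -> deriv_within `[a, b] f t 0) ->
  forall t, a <= t <= b -> f t = f a.
Proof.
move=> f'0 t tab; apply/eqP; rewrite -subr_eq0 -normr_le0.
apply/ler_addgt0Pr => z z0; rewrite add0r.
have ta1 : 0 < t - a + 1 by case/andP: tab => *; lra.
pose e := z / (t - a + 1).
have e0 : 0 < e by rewrite divr_gt0.
apply: (le_trans (local_mean_value_ineq (e := e) _ tab)).
  move=> x xab; have /deriv_withinP/(_ e e0) [d d0 Hd] := f'0 x xab.
  exists d => // y yab yxd; have [->|yx] := eqVneq y x.
    by rewrite !subrr !normr0 mulr0.
  have := Hd (y - x); rewrite subrKC scaler0 subr0; apply => //.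
    by rewrite subr_eq0.
have : e * (t - a + 1) = z by rewrite divfK ?gt_eqF.
lra.
Qed.

Lemma segment_unif_continuous G a b : {within `[a, b], continuous G} ->
  forall e, 0 < e -> exists2 eta, 0 < eta & forall u v, a <= u <= b ->
    a <= v <= b -> `|u - v| < eta -> `|G u - G v| <= e.
Proof.
move=> Gc e e0.
have osc x : a <= x <= b -> exists2 d, 0 < d & forall u v, a <= u <= b ->
    a <= v <= b -> `|u - x| < d -> `|v - x| < d -> `|G u - G v| <= e.
  move=> xab; have e20 : 0 < e / 2 by rewrite divr_gt0.
  move/subspace_continuousP: Gc => /(_ x); rewrite /= in_itv => /(_ xab).
  move=> /cvgrPdist_le /(_ _ e20); rewrite near_withinE.
  move=> /nbhs_ballP [d d0 Hd]; exists d => // u v uab vab ux vx.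
  have close w : a <= w <= b -> `|w - x| < d -> `|G x - G w| <= e / 2.
    move=> wab wx; apply: Hd; last by rewrite /= in_itv.
    by rewrite -ball_normE /= distrC.
  apply: le_trans (ler_distD (G x) _ _) _.
  by rewrite distrC (splitr e) lerD ?close.
pose P s := exists2 eta, 0 < eta & forall u v, a <= u <= s -> a <= v <= s ->
  `|u - v| < eta -> `|G u - G v| <= e.
have [ab|ba] := leP a b; last first.
  by exists 1 => // u v /andP[au ub]; lra.
apply: (@real_induction R P a b _ b); last by rewrite ab lexx.
move=> x xab IH; have [d d0 Hd] := osc x xab.
have [eta0 eta00 Heta0] : P (x - d / 2).
  have [ax|xa] := leP a (x - d / 2); first by apply: IH; rewrite ax; lra.
  by exists 1 => // u v /andP[au ux]; lra.
exists (d / 2) => [|u /andP[xu ub] uxd]; first by rewrite divr_gt0.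
exists (Num.min eta0 (d / 2)) => [|u' v' /andP[au' u'u] /andP[av' v'u]].
  by rewrite lt_min eta00 divr_gt0.
rewrite lt_min => /andP[uv_eta0 uv_d].
have [u'v'_left|] := boolP ((u' <= x - d / 2) && (v' <= x - d / 2)).
  by case/andP: u'v'_left => u'l v'l; apply: Heta0; rewrite ?au' ?av'.
rewrite negb_and -!ltNge => right.
have u'b : u' <= b by apply: le_trans u'u ub.
have v'b : v' <= b by apply: le_trans v'u ub.
move: uv_d; rewrite ltr_norml => /andP[uv1 uv2].
apply: Hd; rewrite ?au' ?av' ?u'b ?v'b ?ltr_norml //.
all: by case/orP: right => ?; apply/andP; split; lra.
Qed.

End Segment.

Section LenBelow.
Variable R : realType.
Implicit Types x y s t : R.

(* For x <= y, the length of [x, y] \cap (-oo, t]. *)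
Definition len_below x y t := Num.min t y - Num.min t x.

Lemma len_below_le x y s t : x <= y -> s <= t -> len_below x y s <= len_below x y t.
Proof.
rewrite /len_below !minEle => xy st.
by case: (leP s y); case: (leP s x); case: (leP t y); case: (leP t x); lra.
Qed.

Lemma len_below_outside x y s t : x <= y -> s <= t -> t <= x \/ y <= s ->
  len_below x y s = len_below x y t.
Proof.
rewrite /len_below !minEle => xy st out.
by case: out => ?; case: (leP s y); case: (leP s x); case: (leP t y); case: (leP t x); lra.
Qed.

Lemma len_below_eq0 x y t : t <= x -> x <= y -> len_below x y t = 0.
Proof. by move=> tx xy; rewrite /len_below !min_l ?subrr // (le_trans tx). Qed.

End LenBelow.

Section StepPrimitive.
Variables (R : realType) (V : normedModType R) (G : R -> V) (a b : R).

Definition mesh n := (b - a) / n.+1%:R.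

Definition node n k := a + k%:R * mesh n.

(* The integral over [a, t] of the step function equal to [G (node n k)] on
   the k-th cell [node n k, node n k.+1] of the uniform partition of [a, b]. *)
Definition step_primitive n t :=
  \sum_(k < n.+1) len_below (node n k) (node n k.+1) t *: G (node n k).

Lemma mesh_ge0 n : a <= b -> 0 <= mesh n.
Proof. by move=> ab; rewrite divr_ge0 // subr_ge0. Qed.

Lemma near_mesh_lt r : 0 < r -> \forall n \near \oo, mesh n < r.
Proof.
move=> r0; have mesh0 : mesh n @[n --> \oo] --> 0.
  by rewrite -(mulr0 (b - a)); apply: cvgM; [exact: cvg_cst | exact: cvg_harmonic].
exact: cvgr_lt _ mesh0 _ r0.
Qed.

Lemma nodeS n k : node n k.+1 = node n k + mesh n.
Proof. by rewrite /node -addn1 natrD mulrDl mul1r addrA. Qed.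

Lemma mulr_mesh n : n.+1%:R * mesh n = b - a.
Proof. by rewrite mulrC divfK ?pnatr_eq0. Qed.

Lemma node_le n k : a <= b -> node n k <= node n k.+1.
Proof. by move=> ab; rewrite nodeS lerDl mesh_ge0. Qed.

Lemma node_last n : node n n.+1 = b.
Proof. by rewrite /node mulr_mesh subrKC. Qed.

Lemma node_in n k : a <= b -> (k <= n.+1)%N -> a <= node n k <= b.
Proof.
move=> ab kn; have m0 := mesh_ge0 n ab.
have : k%:R * mesh n <= n.+1%:R * mesh n by rewrite ler_wpM2r // ler_nat.
have : 0 <= k%:R * mesh n by rewrite mulr_ge0.
by rewrite mulr_mesh /node; lra.
Qed.

Lemma sum_len_below n t : a <= t <= b ->
  \sum_(k < n.+1) len_below (node n k) (node n k.+1) t = t - a.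
Proof.
move=> /andP[a_t t_b]; rewrite /len_below.
rewrite -(big_mkord xpredT (fun k => Num.min t (node n k.+1) - Num.min t (node n k))).
by rewrite telescope_sumr // node_last /node mul0r addr0 (min_l t_b) (min_r a_t).
Qed.

Lemma step_primitive_left n : a <= b -> step_primitive n a = 0.
Proof.
move=> ab; apply: big1 => k _; rewrite len_below_eq0 ?scale0r //.
  by case/andP: (node_in ab (ltnW (ltn_ord k))).
by rewrite node_le.
Qed.

Lemma step_primitive_increment n s t c e : a <= s -> s <= t -> t <= b ->
  (forall u, a <= u <= b -> s - mesh n < u < t -> `|G u - G c| <= e) ->
  `|step_primitive n t - step_primitive n s - (t - s) *: G c| <= e * (t - s).
Proof.
move=> a_s s_t t_b HG; have ab : a <= b by lra.
pose w k := len_below (node n k) (node n k.+1).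
have -> : t - s = \sum_(k < n.+1) (w k t - w k s).
  have sab : a <= s <= b by apply/andP; split; lra.
  have tab : a <= t <= b by apply/andP; split; lra.
  by rewrite sumrB !sum_len_below //; ring.
rewrite /step_primitive -sumrB scaler_suml -sumrB.
apply: le_trans (ler_norm_sum _ _ _) _; rewrite mulr_sumr; apply: ler_sum => k _.
rewrite -scalerBl -scalerBr normrZ.
have w_ge0 : 0 <= w k t - w k s by rewrite subr_ge0 len_below_le ?node_le.
rewrite ger0_norm // mulrC.
have [/andP[kt sk]|] := boolP ((node n k < t) && (s < node n k.+1)).
  apply: ler_wpM2r => //; apply: HG; first exact: node_in (ltnW (ltn_ord k)).
  by rewrite nodeS in sk; apply/andP; split; lra.
rewrite negb_and -!leNgt => /orP out.
by rewrite /w (len_below_outside _ s_t out) ?node_le // subrr !mulr0.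
Qed.

Lemma step_primitive_near n x y r e : a <= x <= b -> a <= y <= b ->
  `|y - x| + mesh n <= r ->
  (forall u, a <= u <= b -> `|u - x| < r -> `|G u - G x| <= e) ->
  `|step_primitive n y - step_primitive n x - (y - x) *: G x| <= e * `|y - x|.
Proof.
move=> /andP[ax xb] yab r_ge HG; have m0 := mesh_ge0 n (le_trans ax xb).
have near_x u : a <= u <= b -> x - `|y - x| - mesh n < u < x + `|y - x| ->
    `|G u - G x| <= e.
  by move=> uab /andP[u1 u2]; apply: HG; rewrite // ltr_norml; apply/andP; split; lra.
case/andP: yab => ay yb; have [xy|yx] := leP x y.
  rewrite ger0_norm ?subr_ge0 // in near_x *.
  apply: step_primitive_increment => // u uab /andP[u1 u2].
  by apply: near_x => //; apply/andP; split; lra.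
rewrite ltr0_norm ?subr_lt0 // opprB in near_x *.
have -> : step_primitive n y - step_primitive n x - (y - x) *: G x =
    - (step_primitive n x - step_primitive n y - (x - y) *: G x).
  by rewrite -scaleNr opprB [RHS]opprB opprB addrC.
rewrite normrN; apply: step_primitive_increment => // [|u uab /andP[u1 u2]].
  exact: ltW.
by apply: near_x => //; apply/andP; split; lra.
Qed.

End StepPrimitive.

Section Primitive.
Variables (R : realType) (V : completeNormedModType R) (G : R -> V) (a b : R).
Hypothesis G_unif : forall e, 0 < e -> exists2 eta, 0 < eta &
  forall u v, a <= u <= b -> a <= v <= b -> `|u - v| < eta -> `|G u - G v| <= e.

Definition primitive t := lim (step_primitive G a b n t @[n --> \oo]).

Lemma step_primitive_cvg t : a <= t <= b ->
  step_primitive G a b n t @[n --> \oo] --> primitive t.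
Proof.
move=> tab; have ab : a <= b by case/andP: tab; apply: le_trans.
apply: cauchy_cvg; apply: cauchy_exP => eps eps0.
have ba1 : 0 < 2 * (b - a + 1) by lra.
pose e := eps / (2 * (b - a + 1)).
have e0 : 0 < e by rewrite divr_gt0.
have e_eps : e * (2 * (b - a + 1)) = eps by rewrite divfK ?gt_eqF.
have [eta eta0 Heta] := G_unif e0.
have eta20 : 0 < eta / 2 by rewrite divr_gt0.
near \oo => N; have mN : mesh a b N < eta / 2 by near: N; exact: near_mesh_lt.
exists (step_primitive G a b N t); rewrite fmapE; near=> n.
have mn : mesh a b n < eta / 2 by near: n; exact: near_mesh_lt.
pose D y := step_primitive G a b N y - step_primitive G a b n y.
have : `|D t - D a| <= (2 * e) * (t - a).
  apply: local_mean_value_ineq tab => x xab; exists (eta / 2) => // y yab yx.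
  have -> : D y - D x = (step_primitive G a b N y - step_primitive G a b N x - (y - x) *: G x)
      - (step_primitive G a b n y - step_primitive G a b n x - (y - x) *: G x).
    by rewrite /D subrACA [RHS]subrACA subrr subr0.
  have near_step m : mesh a b m < eta / 2 -> `|step_primitive G a b m y -
      step_primitive G a b m x - (y - x) *: G x| <= e * `|y - x|.
    by move=> mm; apply: (step_primitive_near (r := eta)) => //; [lra | move=> u uab; apply: Heta].
  apply: le_trans (ler_normB _ _) _.
  by have := near_step _ mN; have := near_step _ mn; lra.
rewrite /D !step_primitive_left // subrr subr0 -ball_normE /=.
have : e * (t - a) <= e * (b - a).
  by apply: ler_wpM2l; [exact: ltW | case/andP: tab => *; lra].
lra.
Unshelve. all: by end_near.
Qed.

Lemma primitive_deriv p : a <= p <= b -> deriv_within `[a, b] primitive p (G p).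
Proof.
move=> pab; apply/deriv_withinP => e e0.
have [eta eta0 Heta] := G_unif e0.
have eta20 : 0 < eta / 2 by rewrite divr_gt0.
exists (eta / 2) => // h _ hd.
rewrite /= in_itv => phab.
have cv : step_primitive G a b n (p + h) - step_primitive G a b n p - h *: G p
    @[n --> \oo] --> primitive (p + h) - primitive p - h *: G p.
  by apply: cvgB; [apply: cvgB; exact: step_primitive_cvg | exact: cvg_cst].
apply: (cvgr_to_le (cvg_norm cv)); near=> n.
have mn : mesh a b n < eta / 2 by near: n; exact: near_mesh_lt.
have := step_primitive_near (y := p + h) (r := eta) (e := e) pab phab.
rewrite [p + h - p]addrC addKr; apply; first lra.
by move=> u uab; apply: Heta.
Unshelve. all: by end_near.
Qed.

End Primitive.

Lemma separating_eq (R : realType) (E E0 : normedModType R)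
    (Phi : set {linear E -> E0}) (x y : E) :
  separating Phi -> (forall phi, Phi phi -> phi x = phi y) -> x = y.
Proof.
move=> sep xy; apply/eqP; rewrite -subr_eq0; apply: contraT => /sep[phi Pphi].
by rewrite linearB /= xy // subrr eqxx.
Qed.

Theorem lemma2p3 (R : realType) (E E0 : completeNormedModType R)
  (a b : R) (F G : R -> E) (Phi : set {linear E -> E0}) :
  {within `[a, b]%classic, continuous G} ->
  (forall phi, Phi phi -> continuous (phi : E -> E0)) ->
  separating Phi ->
  (forall phi, Phi phi -> C1_on a b (phi \o F) (phi \o G)) ->
  C1_on a b F G.
Proof.
move=> Gc Phi_cont sep PhiF; split=> // t; rewrite /= in_itv /= => tab.
have G_unif := segment_unif_continuous Gc.
pose I := primitive G a b.
have I'G q : a <= q <= b -> deriv_within `[a, b] I q (G q) := primitive_deriv G_unif (p := q).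
have FI q : a <= q <= b -> F q - I q = F a - I a.
  move=> qab; apply: (separating_eq sep) => phi Pphi; rewrite !linearB /=.
  apply: (deriv_within0_const (f := fun q => phi (F q) - phi (I q)) _ qab) => x xab.
  rewrite -(subrr (phi (G x))); apply: deriv_withinB.
    by apply: (PhiF phi Pphi).1; rewrite /= in_itv /=.
  exact: deriv_within_linear (Phi_cont phi Pphi) (I'G x xab).
apply/deriv_withinP => e e0.
have /deriv_withinP/(_ e e0) [d d0 Hd] := I'G t tab.
exists d => // h h0 hd th; have thab : a <= t + h <= b by move: th; rewrite /= in_itv.
rewrite -[F (t + h)](subrK (I (t + h))) -[F t](subrK (I t)) !FI //.
by rewrite [_ + I (t + h)]addrC addrKA; apply: Hd.
Qed.
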